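(* Let $A$ be a commutative normed algebra which does not consist entirely of topological divisors of zero (i.e. some element of $A$ is not a TDZ in $A$). If $A$ has approximate units or an approximate identity, then the completion $\mathrm{cl}(A)$ of $A$ is unital. *)

From Stdlib Require Import Reals.
Open Scope R_scope.

(* A (real) normed algebra: a real vector space with an associative bilinear
   product and a submultiplicative norm.  (Complex normed algebras are real
   normed algebras by restriction of scalars, with the same norm, product and
   completion.) *)
Record NormedAlgebra := {
  car :> Type;
  zero : car;
  add : car -> car -> car;
  opp : car -> car;
  scal : R -> car -> car;
  mul : car -> car -> car;
  norm : car -> R;
  addA : forall x y z, add x (add y z) = add (add x y) z;
  addC : forall x y, add x y = add y x;
  add0 : forall x, add zero x = x;
  addN : forall x, add x (opp x) = zero;
  scalA : forall a b x, scal a (scal b x) = scal (a * b) x;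
  scal1 : forall x, scal 1 x = x;
  scalDr : forall a x y, scal a (add x y) = add (scal a x) (scal a y);
  scalDl : forall a b x, scal (a + b) x = add (scal a x) (scal b x);
  mulA : forall x y z, mul x (mul y z) = mul (mul x y) z;
  mulDl : forall x y z, mul (add x y) z = add (mul x z) (mul y z);
  mulDr : forall x y z, mul x (add y z) = add (mul x y) (mul x z);
  mul_scall : forall a x y, mul (scal a x) y = scal a (mul x y);
  mul_scalr : forall a x y, mul x (scal a y) = scal a (mul x y);
  norm_ge0 : forall x, 0 <= norm x;
  norm_eq0 : forall x, norm x = 0 -> x = zero;
  norm_scal : forall a x, norm (scal a x) = Rabs a * norm x;
  norm_triangle : forall x y, norm (add x y) <= norm x + norm y;
  norm_submult : forall x y, norm (mul x y) <= norm x * norm y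
}.

Arguments zero {_}.
Arguments add {_}.
Arguments opp {_}.
Arguments scal {_}.
Arguments mul {_}.
Arguments norm {_}.

Definition sub {A : NormedAlgebra} (x y : A) : A := add x (opp y).

Definition commutative_alg (A : NormedAlgebra) : Prop :=
  forall x y : A, mul x y = mul y x.

Definition is_TDZ (A : NormedAlgebra) (x : A) : Prop :=
  exists z : nat -> A,
    (forall n, norm (z n) = 1) /\ Un_cv (fun n => norm (mul x (z n))) 0.

Definition has_approx_units (A : NormedAlgebra) : Prop :=
  forall (a : A) (eps : R), 0 < eps -> exists u : A, norm (sub (mul u a) a) < eps.

Definition has_approx_identity (A : NormedAlgebra) : Prop :=
  exists (D : Type) (le : D -> D -> Prop) (e : D -> A),
    (exists d : D, True) /\
    (forall d, le d d) /\
    (forall d1 d2 d3, le d1 d2 -> le d2 d3 -> le d1 d3) /\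
    (forall d1 d2, exists d3, le d1 d3 /\ le d2 d3) /\
    (forall (a : A) (eps : R), 0 < eps ->
       exists d0, forall d, le d0 d -> norm (sub (mul (e d) a) a) < eps).

(* The completion cl(A): Cauchy sequences in A modulo null sequences,
   with pointwise operations. *)
Definition cauchy_seq {A : NormedAlgebra} (x : nat -> A) : Prop :=
  forall eps : R, 0 < eps ->
    exists N : nat, forall n m, (N <= n)%nat -> (N <= m)%nat -> norm (sub (x n) (x m)) < eps.

(* equality of the classes of two Cauchy sequences in cl(A) *)
Definition cl_eq {A : NormedAlgebra} (x y : nat -> A) : Prop :=
  Un_cv (fun n => norm (sub (x n) (y n))) 0.

Definition completion_unital (A : NormedAlgebra) : Prop :=
  exists e : nat -> A, cauchy_seq e /\
    forall x : nat -> A, cauchy_seq x ->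
      cl_eq (fun n => mul (e n) (x n)) x /\ cl_eq (fun n => mul (x n) (e n)) x.

(* Not being a TDZ means that multiplication by a is bounded
   below: c ||z|| <= ||a z|| for some c > 0.  Choose u_n in A with
   ||u_n a - a|| -> 0.  By commutativity a (u_n x - x) = (u_n a - a) x, hence
       c ||u_n x - x|| <= ||u_n a - a|| ||x||        for every x in A.
   Applied to x = u_n - u_m (in the form c ||u_n - u_m|| <= ||a u_n - a u_m||)
   this shows (u_n) is Cauchy, and applied to a Cauchy (hence bounded)
   sequence (x_n) it shows u_n x_n - x_n -> 0; so the class of (u_n) is a unit
   of cl(A).  An approximate identity yields approximate units. *)

From Stdlib Require Import Reals Lra Lia Classical ClassicalEpsilon.

Section AlgebraFacts.
Variable A : NormedAlgebra.

Lemma add0r (x : A) : add x zero = x.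
Proof. rewrite addC. apply add0. Qed.

Lemma scal0 (x : A) : scal 0 x = zero.
Proof.
  set (s := scal 0 x).
  assert (Hss : s = add s s).
  { unfold s. rewrite <- scalDl. f_equal. ring. }
  transitivity (add (add s s) (opp s)).
  - rewrite <- addA, addN, add0r. reflexivity.
  - rewrite <- Hss. apply addN.
Qed.

(* The additive inverse is scaling by -1; this transfers linearity of the
   product and homogeneity of the norm to negation. *)
Lemma oppE (x : A) : opp x = scal (-1) x.
Proof.
  assert (Hsum : add x (scal (-1) x) = zero).
  { rewrite <- (scal1 A x) at 1. rewrite <- scalDl.
    replace (1 + -1) with 0 by ring. apply scal0. }
  rewrite <- (add0r (scal (-1) x)), <- (addN A x), addA.
  rewrite (addC A (scal (-1) x) x), Hsum, add0. reflexivity.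
Qed.

Lemma mul_subl (x y z : A) : mul (sub x y) z = sub (mul x z) (mul y z).
Proof. unfold sub. rewrite mulDl, !oppE, mul_scall. reflexivity. Qed.

Lemma mul_subr (x y z : A) : mul x (sub y z) = sub (mul x y) (mul x z).
Proof. unfold sub. rewrite mulDr, !oppE, mul_scalr. reflexivity. Qed.

Lemma norm_sub_sym (x y : A) : norm (sub x y) = norm (sub y x).
Proof.
  assert (Hswap : sub y x = scal (-1) (sub x y)).
  { unfold sub. rewrite !oppE, scalDr, scalA.
    replace (-1 * -1) with 1 by ring. rewrite scal1, addC. reflexivity. }
  rewrite Hswap, norm_scal, Rabs_left by lra. ring.
Qed.

Lemma norm_sub_tri (x y z : A) : norm (sub x z) <= norm (sub x y) + norm (sub y z).
Proof.
  replace (sub x z) with (add (sub x y) (sub y z)); [apply norm_triangle|].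
  unfold sub. rewrite <- addA, (addA A (opp y) y), (addC A (opp y) y), addN, add0.
  reflexivity.
Qed.

Lemma norm_le_sub (x y : A) : norm x <= norm (sub x y) + norm y.
Proof.
  replace x with (add (sub x y) y) at 1; [apply norm_triangle|].
  unfold sub. rewrite <- addA, (addC A (opp y) y), addN, add0r. reflexivity.
Qed.

End AlgebraFacts.

Lemma inv_succ_small (eps : R) :
  0 < eps -> exists N, forall n, (N <= n)%nat -> / (INR n + 1) < eps.
Proof.
  intros Heps. destruct (archimed_cor1 eps Heps) as [N [HN HN0]].
  exists N. intros n Hn.
  apply Rle_lt_trans with (/ INR N); [|exact HN].
  apply Rinv_le_contravar; [apply lt_0_INR; lia|].
  apply le_INR in Hn. lra.
Qed.

Lemma inv_succ_pos (n : nat) : 0 < / (INR n + 1).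
Proof. apply Rinv_0_lt_compat. pose proof (pos_INR n). lra. Qed.

Lemma Un_cv0_nonneg (d : nat -> R) :
  (forall n, 0 <= d n) ->
  Un_cv d 0 <-> forall eps, 0 < eps -> exists N, forall n, (N <= n)%nat -> d n < eps.
Proof.
  intros Hd. unfold Un_cv, R_dist.
  split; intros Hcv eps Heps; destruct (Hcv eps Heps) as [N HN]; exists N;
    intros n Hn; specialize (HN n Hn);
    rewrite Rminus_0_r, Rabs_pos_eq in * by apply Hd; exact HN.
Qed.

Lemma cauchy_eventually_bounded (A : NormedAlgebra) (x : nat -> A) :
  cauchy_seq x -> exists N B, 0 < B /\ forall n, (N <= n)%nat -> norm (x n) <= B.
Proof.
  intros Hx. destruct (Hx 1 Rlt_0_1) as [N HN].
  exists N, (norm (x N) + 1). split; [pose proof (norm_ge0 A (x N)); lra|].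
  intros n Hn. pose proof (norm_le_sub A (x n) (x N)). pose proof (HN n N Hn (le_n N)).
  lra.
Qed.

Lemma approx_identity_units (A : NormedAlgebra) :
  has_approx_identity A -> has_approx_units A.
Proof.
  intros [D [le [e [_ [Hrefl [_ [_ He]]]]]]] x eps Heps.
  destruct (He x eps Heps) as [d0 Hd0]. exists (e d0). apply Hd0, Hrefl.
Qed.

Lemma approx_unit_sequence (A : NormedAlgebra) (a : A) :
  has_approx_units A -> exists u : nat -> A, Un_cv (fun n => norm (sub (mul (u n) a) a)) 0.
Proof.
  intros HU.
  assert (Hchoice : forall n : nat, exists v : A, norm (sub (mul v a) a) < / (INR n + 1)).
  { intro n. apply HU, inv_succ_pos. }
  destruct (choice _ Hchoice) as [u Hu].
  exists u. apply Un_cv0_nonneg; [intro; apply norm_ge0|].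
  intros eps Heps. destruct (inv_succ_small eps Heps) as [N HN].
  exists N. intros n Hn. eapply Rlt_trans; [apply Hu|apply HN, Hn].
Qed.

(* An element that is not a topological divisor of zero is bounded below:
   otherwise, normalising elements z_n with ||a z_n|| < ||z_n|| / (n+1)
   produces a sequence witnessing that a is a TDZ. *)
Lemma not_TDZ_bounded_below (A : NormedAlgebra) (a : A) :
  ~ is_TDZ A a -> exists c, 0 < c /\ forall z : A, c * norm z <= norm (mul a z).
Proof.
  intros Hnot. apply NNPP. intros Hunbdd. apply Hnot.
  assert (Hsmall : forall n : nat, exists z : A, norm (mul a z) < / (INR n + 1) * norm z).
  { intro n. apply NNPP. intros Hno. apply Hunbdd.
    exists (/ (INR n + 1)). split; [apply inv_succ_pos|].
    intro z. apply Rnot_lt_le. intro Hlt. apply Hno. exists z. exact Hlt. }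
  destruct (choice _ Hsmall) as [z Hz].
  assert (Hpos : forall n, 0 < norm (z n)).
  { intro n. destruct (Rle_lt_or_eq_dec 0 (norm (z n)) (norm_ge0 A _)) as [Hlt|Heq];
      [exact Hlt|].
    specialize (Hz n). rewrite <- Heq, Rmult_0_r in Hz.
    pose proof (norm_ge0 A (mul a (z n))). lra. }
  assert (Hinv : forall n, 0 < / norm (z n)) by (intro; apply Rinv_0_lt_compat, Hpos).
  exists (fun n => scal (/ norm (z n)) (z n)). split.
  - intro n. rewrite norm_scal, Rabs_pos_eq by (left; apply Hinv).
    field. apply Rgt_not_eq, Hpos.
  - apply Un_cv0_nonneg; [intro; apply norm_ge0|].
    intros eps Heps. destruct (inv_succ_small eps Heps) as [N HN].
    exists N. intros n Hn.
    rewrite mul_scalr, norm_scal, Rabs_pos_eq by (left; apply Hinv).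
    apply Rlt_trans with (/ norm (z n) * (/ (INR n + 1) * norm (z n))).
    + apply Rmult_lt_compat_l; [apply Hinv|apply Hz].
    + replace (/ norm (z n) * (/ (INR n + 1) * norm (z n))) with (/ (INR n + 1))
        by (field; pose proof (Hpos n); pose proof (pos_INR n); split; lra).
      apply HN, Hn.
Qed.

Section UnitOfCompletion.
Variable A : NormedAlgebra.
Hypothesis comm : commutative_alg A.
Variables (a : A) (c : R).
Hypothesis c_pos : 0 < c.
Hypothesis a_bounded_below : forall z : A, c * norm z <= norm (mul a z).

(* The key estimate: how far v is from acting as a unit on x is controlled
   by how far it is from acting as a unit on a, since a (v x - x) = (v a - a) x. *)
Lemma unit_defect_bound (v x : A) :
  c * norm (sub (mul v x) x) <= norm (sub (mul v a) a) * norm x.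
Proof.
  eapply Rle_trans; [apply a_bounded_below|].
  rewrite mul_subr, mulA, (comm a v), <- mul_subl.
  apply norm_submult.
Qed.

Variable u : nat -> A.
Hypothesis u_approx_unit : Un_cv (fun n => norm (sub (mul (u n) a) a)) 0.

Let u_defect_small :=
  proj1 (Un_cv0_nonneg _ (fun n => norm_ge0 A (sub (mul (u n) a) a))) u_approx_unit.

(* (u_n) is Cauchy: c ||u_n - u_m|| <= ||u_n a - a|| + ||u_m a - a||. *)
Lemma approx_unit_cauchy : cauchy_seq u.
Proof.
  intros eps Heps.
  destruct (u_defect_small (c * eps / 2)) as [N HN]; [nra|].
  exists N. intros n m Hn Hm.
  apply Rmult_lt_reg_l with c; [exact c_pos|].
  eapply Rle_lt_trans; [apply a_bounded_below|].
  rewrite mul_subr, (comm a (u n)), (comm a (u m)).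
  eapply Rle_lt_trans; [apply (norm_sub_tri A _ a _)|].
  rewrite (norm_sub_sym A a).
  pose proof (HN n Hn). pose proof (HN m Hm). lra.
Qed.

Lemma approx_unit_left_unit (x : nat -> A) :
  cauchy_seq x -> cl_eq (fun n => mul (u n) (x n)) x.
Proof.
  intros Hx. destruct (cauchy_eventually_bounded A x Hx) as [N1 [B [HB HxB]]].
  apply Un_cv0_nonneg; [intro; apply norm_ge0|].
  intros eps Heps. destruct (u_defect_small (c * eps / B)) as [N2 HN2].
  { apply Rdiv_lt_0_compat; [nra|exact HB]. }
  exists (max N1 N2). intros n Hn.
  apply Rmult_lt_reg_l with c; [exact c_pos|].
  eapply Rle_lt_trans; [apply unit_defect_bound|].
  assert (Hdef : norm (sub (mul (u n) a) a) < c * eps / B) by (apply HN2; lia).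
  assert (Hxn : norm (x n) <= B) by (apply HxB; lia).
  apply Rle_lt_trans with (norm (sub (mul (u n) a) a) * B).
  - apply Rmult_le_compat_l; [apply norm_ge0|exact Hxn].
  - replace (c * eps) with (c * eps / B * B) by (field; lra).
    apply Rmult_lt_compat_r; [exact HB|exact Hdef].
Qed.

End UnitOfCompletion.

Theorem mainTheorem6 (A : NormedAlgebra) :
  commutative_alg A ->
  (exists a : A, ~ is_TDZ A a) ->
  (has_approx_units A \/ has_approx_identity A) ->
  completion_unital A.
Proof.
  intros comm [a Ha] Happrox.
  assert (HU : has_approx_units A)
    by (destruct Happrox as [HU|HI]; [exact HU|exact (approx_identity_units A HI)]).
  destruct (not_TDZ_bounded_below A a Ha) as [c [Hc Hbelow]].
  destruct (approx_unit_sequence A a HU) as [u Hu].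
  exists u. split; [exact (approx_unit_cauchy A comm a c Hc Hbelow u Hu)|].
  intros x Hx.
  assert (Hleft := approx_unit_left_unit A comm a c Hc Hbelow u Hu x Hx).
  split; [exact Hleft|].
  apply (Un_cv_ext (fun n => norm (sub (mul (u n) (x n)) (x n)))); [|exact Hleft].
  intro n. rewrite comm. reflexivity.
Qed.
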